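(* For integers $i\ge0$, $j\ge0$ and real $k$: (a) if $i\ge1$ and $j\ge1$, then $\sum_{r=0}^{j}(-1)^{j-r}b_{i,r,1}=b_{i,j+1,0}$; (b) $\sum_{r=0}^{i-1}(-1)^{i-1-r}b_{i,r,k}=i!+(-1)^{i-1}(k-1)^i$; (c) $\sum_{r=0}^{i}(-1)^{r}b_{i,r,k}=(k-1)^i$; (d) $\sum_{r=0}^{i}(-1)^{i-r}b_{i,r,0}=1$.
   Context: For integers $i\ge0$, $j\ge0$ and real $k$, $b_{i,j,k}=\sum_{r=0}^{j}\binom{j}{r}(-1)^{j-r}(r+k)^i$, with the convention $0^0=1$. *)

From HB Require Import structures.
From mathcomp Require Import all_boot all_order all_algebra.
From mathcomp Require Import reals.
Set Implicit Arguments. Unset Strict Implicit. Unset Printing Implicit Defensive.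
Import Order.TTheory GRing.Theory Num.Theory.
Local Open Scope ring_scope.

(* b_{i,j,k} = sum_{r=0}^{j} C(j,r) (-1)^{j-r} (r+k)^i ; note x ^+ 0 = 1, so 0^0 = 1 *)
Definition b {R : realType} (i j : nat) (k : R) : R :=
  \sum_(0 <= r < j.+1) ('C(j, r))%:R * (-1) ^+ (j - r) * (r%:R + k) ^+ i.

From HB Require Import structures.
From mathcomp Require Import all_boot all_order all_algebra.
From mathcomp Require Import reals.
From mathcomp Require Import ring zify.
Import Order.TTheory GRing.Theory Num.Theory.
Local Open Scope ring_scope.

(* b i j k is the j-th forward difference of x |-> (x + k)^i taken at 0.  Hence
   b i j (k + 1) = b i j k + b i j.+1 k, b i j k = 0 for j > i and b i i k = i!.
   Rewriting every term of the alternating sums (a)-(d) with the shift rule makes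
   them telescope, leaving only a boundary term b i 0 _ = _^i and a term that is
   either 0 or i!. *)

Lemma signrB (R : pzRingType) (n r : nat) :
  (r <= n)%N -> (-1) ^+ (n - r) = (-1) ^+ n * (-1) ^+ r :> R.
Proof. by move=> le_rn; rewrite -signr_odd oddB // signr_addb !signr_odd. Qed.

Lemma sum_signrB (R : pzRingType) (n : nat) (F : nat -> R) :
  \sum_(0 <= r < n.+1) (-1) ^+ (n - r) * F r
    = (-1) ^+ n * \sum_(0 <= r < n.+1) (-1) ^+ r * F r.
Proof.
rewrite mulr_sumr; apply: eq_big_nat => r /andP[_ lt_rn].
by rewrite signrB ?mulrA.
Qed.

Lemma telescope_signr (R : pzRingType) (n : nat) (u : nat -> R) :
  \sum_(0 <= r < n.+1) (-1) ^+ r * (u r + u r.+1) = u 0%N + (-1) ^+ n * u n.+1.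
Proof.
rewrite (telescope_sumr_eq (fun r => - ((-1) ^+ r * u r))) //; last first.
  by move=> r _; rewrite opprK exprS mulN1r mulNr opprK mulrDr addrC.
by rewrite expr0 mul1r opprK addrC exprS mulN1r mulNr opprK.
Qed.

Section ForwardDifference.
Context {R : comPzRingType}.

Definition fdiff (j : nat) (f : nat -> R) : R :=
  \sum_(0 <= r < j.+1) ('C(j, r))%:R * (-1) ^+ (j - r) * f r.

Lemma fdiffS (j : nat) (f : nat -> R) :
  fdiff j.+1 f = fdiff j (fun r => f r.+1) - fdiff j f.
Proof.
rewrite /fdiff big_nat_recl // bin0 subn0 exprS.
under eq_bigr => r _ do rewrite binS subSS natrD !mulrDl.
rewrite big_split /= addrA addrC; congr (_ + _).
rewrite [in RHS]big_nat_recl // big_nat_recr //= bin_small // !mul0r addr0.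
rewrite bin0 subn0 opprD -sumrN; congr (_ + _); first by ring.
apply: eq_big_nat => r /andP[_ lt_rj].
by rewrite -(subnSK lt_rj) exprS; ring.
Qed.

Lemma fdiff_pow_succ (i j : nat) (k : R) :
  fdiff j (fun r => (r.+1%:R + k) ^+ i)
    = \sum_(0 <= m < i.+1) ('C(i, m))%:R * fdiff j (fun r => (r%:R + k) ^+ m).
Proof.
rewrite /fdiff.
under eq_bigr => r _ do rewrite -addn1 natrD addrAC exprD1n mulr_sumr.
rewrite exchange_big /= big_mkord; apply: eq_bigr => m _.
by rewrite mulr_sumr; apply: eq_bigr => r _; rewrite mulrnAr -mulr_natl; ring.
Qed.

Lemma fdiff_pow (i j : nat) (k : R) : (i <= j)%N ->
  fdiff j (fun r => (r%:R + k) ^+ i) = if i == j then (j`!)%:R else 0.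
Proof.
elim: j i => [|j IHj] i.
  by rewrite leqn0 => /eqP->; rewrite /fdiff big_nat1 !expr0 !mul1r.
move=> le_ij; rewrite fdiffS fdiff_pow_succ big_nat_recr //= binn mul1r addrK.
have [->|ne_ij] := eqVneq i j.+1.
  rewrite big_nat_recr //= big1_seq => [|m /andP[_]]; last first.
    rewrite mem_index_iota => /andP[_ lt_mj].
    by rewrite IHj ?(ltnW lt_mj) // (ltn_eqF lt_mj) mulr0.
  by rewrite IHj // eqxx add0r binSn factS natrM.
rewrite big1_seq // => m /andP[_]; rewrite mem_index_iota => /andP[_ lt_mi].
have lt_mj : (m < j)%N by move: le_ij ne_ij lt_mi; lia.
by rewrite IHj ?(ltnW lt_mj) // (ltn_eqF lt_mj) mulr0.
Qed.

End ForwardDifference.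

Section BCoefficients.
Variable R : realType.

Lemma bE (i j : nat) (k : R) : b i j k = fdiff j (fun r => (r%:R + k) ^+ i).
Proof. by []. Qed.

Lemma b0 (i : nat) (k : R) : b i 0 k = k ^+ i.
Proof. by rewrite /b big_nat1 bin0 expr0 !mul1r add0r. Qed.

Lemma b_shift (i j : nat) (k : R) : b i j (k + 1) = b i j k + b i j.+1 k.
Proof.
rewrite !bE fdiffS [RHS]addrC subrK; apply: eq_bigr => r _.
by rewrite -addn1 natrD addrAC addrA.
Qed.

Lemma b_small (i j : nat) (k : R) : (i < j)%N -> b i j k = 0.
Proof. by move=> lt_ij; rewrite bE fdiff_pow ?(ltnW lt_ij) // ltn_eqF. Qed.

Lemma b_diag (i : nat) (k : R) : b i i k = (i`!)%:R.
Proof. by rewrite bE fdiff_pow // eqxx. Qed.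

Lemma sum_signr_b (i n : nat) (k : R) :
  \sum_(0 <= r < n.+1) (-1) ^+ r * b i r k = (k - 1) ^+ i + (-1) ^+ n * b i n.+1 (k - 1).
Proof.
have b_pred r : b i r k = b i r (k - 1) + b i r.+1 (k - 1) by rewrite -b_shift subrK.
under eq_bigr => r _ do rewrite b_pred.
by rewrite telescope_signr b0.
Qed.

End BCoefficients.

Theorem mainTheorem12 (R : realType) (i j : nat) (k : R) :
  [/\ ((1 <= i)%N -> (1 <= j)%N ->
        \sum_(0 <= r < j.+1) (-1) ^+ (j - r) * b i r (1 : R) = b i j.+1 (0 : R)),
      \sum_(0 <= r < i) (-1) ^+ (i.-1 - r) * b i r k
        = (i`!)%:R + (-1) ^ (i%:Z - 1) * (k - 1) ^+ i,
      \sum_(0 <= r < i.+1) (-1) ^+ r * b i r k = (k - 1) ^+ i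
    & \sum_(0 <= r < i.+1) (-1) ^+ (i - r) * b i r (0 : R) = 1].
Proof.
have part_c (x : R) : \sum_(0 <= r < i.+1) (-1) ^+ r * b i r x = (x - 1) ^+ i.
  by rewrite sum_signr_b b_small // mulr0 addr0.
split.
- move=> i_gt0 _; rewrite sum_signrB.
  have b_one r : b i r 1 = b i r 0 + b i r.+1 0 by rewrite -b_shift add0r.
  under eq_bigr => r _ do rewrite b_one.
  by rewrite telescope_signr b0 expr0n gtn_eqF // mulr0n add0r signrMK.
- case: i part_c => [|n] _.
    by rewrite big_geq // fact0 expr0 mulr1 sub0r exprN1 invrN invr1 subrr.
  rewrite /= sum_signrB sum_signr_b b_diag mulrDr signrMK addrC.
  by rewrite -addn1 PoszD addrK -exprnP.
- exact: part_c.
- by rewrite (sum_signrB _ _ (fun r => b i r 0)) part_c sub0r -expr2 sqrr_sign.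
Qed.
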